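(* Let $\mathrm{k}$ be an infinite field. For every integer $n\geq4$, the $\mathrm{k}$-algebra $\mathrm{k}[T]/(T^n)$ has infinitely many subalgebras.
   Context: Subalgebras are unital (contain $1$). *)

From HB Require Import structures.
From mathcomp Require Import all_boot all_order all_algebra.
From mathcomp Require Import boolp classical_sets cardinality.
Set Implicit Arguments. Unset Strict Implicit. Unset Printing Implicit Defensive.
Import GRing.Theory.
Local Open Scope ring_scope.
Local Open Scope classical_set_scope.

(* The k-algebra k[T]/(T^n) is modeled by its canonical representatives:
   polynomials of size <= n (degree < n), with the usual addition and
   k-scaling, unit 1, and multiplication reduced modulo T^n. *)
Definition trunc_mul (K : fieldType) (n : nat) (p q : {poly K}) : {poly K} :=
  (p * q) %% 'X^n.

Definition truncpoly (K : fieldType) (n : nat) : set {poly K} :=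
  [set p | (size p <= n)%N].

Definition is_subalgebra (K : fieldType) (n : nat) (S : set {poly K}) : Prop :=
  [/\ S `<=` @truncpoly K n,
      S 1,
      (forall p q, S p -> S q -> S (p + q)),
      (forall (a : K) p, S p -> S (a *: p)) &
      (forall p q, S p -> S q -> S (trunc_mul n p q))].

From mathcomp Require Import all_boot all_order all_algebra.
From mathcomp Require Import boolp classical_sets cardinality.
From mathcomp Require Import ring.
Set Implicit Arguments. Unset Strict Implicit. Unset Printing Implicit Defensive.
Import GRing.Theory.
Local Open Scope ring_scope.
Local Open Scope classical_set_scope.

(* For each a in k, the classes p with p_1 = 0 and p_3 = a p_2 form a
   subalgebra S_a of k[T]/(T^n): once the T-coefficients vanish, the
   coefficients of T^2 and T^3 of a product are p_0 q_2 + p_2 q_0 and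
   p_0 q_3 + p_3 q_0, so the relation p_3 = a p_2 is multiplicative.
   Since T^2 + a T^3 lies in S_b only for b = a, the map a |-> S_a is
   injective, and an infinite field gives infinitely many subalgebras. *)

Section CoefProduct.
Variables (R : comNzRingType) (p q : {poly R}).
Hypotheses (p1 : p`_1 = 0) (q1 : q`_1 = 0).

Lemma coefM1_eq0 : (p * q)`_1 = 0.
Proof. by rewrite coefM !big_ord_recr big_ord0 /= p1 q1 !(mulr0, mul0r, add0r). Qed.

Lemma coefM3_eq_mul_coefM2 (a : R) :
  p`_3 = a * p`_2 -> q`_3 = a * q`_2 -> (p * q)`_3 = a * (p * q)`_2.
Proof.
move=> p3 q3; rewrite !coefM !big_ord_recr big_ord0 /= p1 q1 p3 q3.
by rewrite big_ord0 subn0; ring.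
Qed.

End CoefProduct.

Lemma size_trunc_mul (K : fieldType) (n : nat) (p q : {poly K}) :
  (size (trunc_mul n p q) <= n)%N.
Proof. by rewrite /trunc_mul -Pdiv.IdomainMonic.take_poly_modp size_take_poly. Qed.

Lemma coef_trunc_mul (K : fieldType) (n i : nat) (p q : {poly K}) :
  (i < n)%N -> (trunc_mul n p q)`_i = (p * q)`_i.
Proof.
by move=> lt_in; rewrite /trunc_mul -Pdiv.IdomainMonic.take_poly_modp coef_take_poly lt_in.
Qed.

Definition coef32_subalg (K : fieldType) (n : nat) (a : K) : set {poly K} :=
  [set p | [/\ (size p <= n)%N, p`_1 = 0 & p`_3 = a * p`_2]].

Lemma coef32_subalg_is_subalgebra (K : fieldType) (n : nat) (a : K) :
  (4 <= n)%N -> is_subalgebra n (coef32_subalg n a).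
Proof.
move=> n4; have lt_n i : (i < 4)%N -> (i < n)%N := fun lt_i4 => leq_trans lt_i4 n4.
split.
- by move=> p [].
- by split; rewrite ?size_poly1 ?(leq_trans _ n4) // !coef1 /= ?mulr0.
- move=> p q [hp p1 p3] [hq q1 q3]; split.
  + by rewrite (leq_trans (size_polyD _ _)) // geq_max hp hq.
  + by rewrite coefD p1 q1 addr0.
  + by rewrite !coefD p3 q3 mulrDr.
- move=> c p [hp p1 p3]; split.
  + by rewrite (leq_trans (size_scale_leq _ _)).
  + by rewrite coefZ p1 mulr0.
  + by rewrite !coefZ p3 mulrCA.
- move=> p q [_ p1 p3] [_ q1 q3]; split.
  + exact: size_trunc_mul.
  + by rewrite coef_trunc_mul ?lt_n // coefM1_eq0.
  + by rewrite !coef_trunc_mul ?lt_n // (coefM3_eq_mul_coefM2 p1 q1 p3 q3).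
Qed.

Lemma coef32_subalg_inj (K : fieldType) (n : nat) :
  (4 <= n)%N -> injective (@coef32_subalg K n).
Proof.
move=> n4 a b eq_ab.
have coefX23 (c : K) i : ('X^2 + c *: 'X^3)`_i = (i == 2)%:R + c * (i == 3)%:R.
  by rewrite coefD coefZ !coefXn.
have : coef32_subalg n a ('X^2 + a *: 'X^3).
  split; rewrite ?coefX23 /= ?mulr0 ?addr0 ?add0r ?mulr1 //.
  rewrite (leq_trans (size_polyD _ _)) // geq_max size_polyXn (leq_trans _ n4) //.
  by rewrite (leq_trans (size_scale_leq _ _)) // size_polyXn.
by rewrite eq_ab => -[_ _]; rewrite !coefX23 /= mulr0 addr0 add0r !mulr1.
Qed.

Theorem lemma3p4 (K : fieldType) (n : nat) :
  infinite_set [set: K] -> (4 <= n)%N ->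
  infinite_set [set S : set {poly K} | is_subalgebra n S].
Proof.
move=> Kinf n4 subalg_fin; apply: Kinf.
have -> : [set: K] = @coef32_subalg K n @^-1` [set S | is_subalgebra n S].
  by apply/seteqP; split=> a //= _; exact: coef32_subalg_is_subalgebra.
apply: finite_preimage subalg_fin => a b _ _.
exact: coef32_subalg_inj.
Qed.
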